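(* Let $0<p_1\le p_2\le1$ and let $X_1,X_2,Y_1,Y_2$ be independent random variables with $X_1$ geometric with success probability $p_1$, $X_2$ geometric with success probability $p_2$, and $Y_1,Y_2$ geometric with success probability $(p_1+p_2)/2$. Then for every positive integer $j$, $$\mathbb{P}(X_1+X_2>j)\ge\mathbb{P}(Y_1+Y_2>j).$$
   Context: A random variable $Y$ is geometric with success probability $p$ if $\mathbb{P}(Y=s)=(1-p)^{s-1}p$ for $s=1,2,\dots$. *)

From Stdlib Require Import Reals Lra Lia.
Open Scope R_scope.

Definition geom_pmf (p : R) (s : nat) : R :=
  match s with
  | O => 0
  | S k => (1 - p) ^ k * p
  end.

(* pmf of X1 + X2 for independent X1 ~ Geom(p1), X2 ~ Geom(p2):
   P(X1 + X2 = s) = sum_{a=0}^{s} P(X1 = a) P(X2 = s - a) *)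
Definition geom_sum_pmf (p1 p2 : R) (s : nat) : R :=
  sum_f_R0 (fun a => geom_pmf p1 a * geom_pmf p2 (s - a)) s.

Definition geom_sum_tail (p1 p2 : R) (j : nat) : R :=
  1 - sum_f_R0 (geom_sum_pmf p1 p2) j.

From Stdlib Require Import Reals Lra Lia.
Open Scope R_scope.

(* Put a = 1 - p1, b = 1 - p2 and q = (a + b) / 2, so that
   the averaged success probability (p1 + p2) / 2 has failure probability q.
   The whole computation is governed by the complete homogeneous symmetric
   polynomials h_n(a, b) = sum_{k <= n} a^k b^(n-k):
   - the convolution gives P(X1 + X2 = n + 2) = p1 p2 h_n(a, b), and the
     three-term recurrence h_(n+2) = (a + b) h_(n+1) - a b h_n then yields
     the closed form P(X1 + X2 > n + 2) = h_(n+1)(a, b) - a b h_n(a, b);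
   - averaging the two one-sided recurrences of h_(n+1)(a, b) and using the
     power-mean inequality q^n <= (a^n + b^n) / 2 shows that the gap
     D_n = h_n(a, b) - h_n(q, q) satisfies D_(n+1) >= q D_n >= 0;
   - since a b <= q^2 and q <= 1, the difference of the two tails equals
     D_(n+1) - q^2 D_n + (q^2 - a b) h_n(a, b), which is nonnegative. *)

(* The complete homogeneous symmetric polynomial h_n(a, b) of degree n in two
   variables, through the recurrence h_(n+1) = b h_n + a^(n+1). *)
Fixpoint hsym (a b : R) (n : nat) : R :=
  match n with
  | O => 1
  | S m => b * hsym a b m + a ^ S m
  end.

Lemma hsym_sum (a b : R) (n : nat) :
  sum_f_R0 (fun k => a ^ k * b ^ (n - k)) n = hsym a b n.
Proof.
  induction n as [|n IH].
  - simpl. ring.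
  - rewrite tech5, Nat.sub_diag.
    rewrite (sum_eq _ (fun k => a ^ k * b ^ (n - k) * b)).
    + rewrite <- scal_sum, IH. simpl. ring.
    + intros i Hi. replace (S n - i)%nat with (S (n - i)) by lia. simpl. ring.
Qed.

Lemma hsym_succ_left (a b : R) (n : nat) :
  hsym a b (S n) = a * hsym a b n + b ^ S n.
Proof.
  induction n as [|n IH].
  - simpl. ring.
  - change (hsym a b (S (S n))) with (b * hsym a b (S n) + a ^ S (S n)).
    rewrite IH at 1. simpl. ring.
Qed.

Lemma hsym_rec3 (a b : R) (n : nat) :
  hsym a b (S (S n)) = (a + b) * hsym a b (S n) - a * b * hsym a b n.
Proof.
  simpl. ring.
Qed.

Lemma hsym_nonneg (a b : R) (n : nat) : 0 <= a -> 0 <= b -> 0 <= hsym a b n.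
Proof.
  intros Ha Hb. induction n as [|n IH]; simpl.
  - lra.
  - assert (0 <= a ^ S n) by (apply pow_le; lra).
    assert (0 <= b * hsym a b n) by (apply Rmult_le_pos; lra).
    simpl in *. lra.
Qed.

Lemma pow_mean (a b : R) (n : nat) : 0 <= a -> 0 <= b ->
  ((a + b) / 2) ^ n <= (a ^ n + b ^ n) / 2.
Proof.
  intros Ha Hb. induction n as [|n IH].
  - simpl. lra.
  - (* x -> x^n is monotone, so (a - b) and (a^n - b^n) have the same sign. *)
    assert (Hsign : 0 <= (a - b) * (a ^ n - b ^ n)).
    { destruct (Rle_dec b a) as [Hba | Hab].
      - assert (b ^ n <= a ^ n) by (apply pow_incr; lra).
        apply Rmult_le_pos; lra.
      - assert (a ^ n <= b ^ n) by (apply pow_incr; lra).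
        replace ((a - b) * (a ^ n - b ^ n)) with ((b - a) * (b ^ n - a ^ n)) by ring.
        apply Rmult_le_pos; lra. }
    assert (Hq : 0 <= (a + b) / 2) by lra.
    assert (((a + b) / 2) * ((a + b) / 2) ^ n <= ((a + b) / 2) * ((a ^ n + b ^ n) / 2))
      by (apply Rmult_le_compat_l; lra).
    simpl. nra.
Qed.

Lemma hsym_gap_step (a b : R) (n : nat) : 0 <= a -> 0 <= b ->
  let q := (a + b) / 2 in
  hsym a b (S n) - hsym q q (S n) >= q * (hsym a b n - hsym q q n).
Proof.
  intros Ha Hb q.
  assert (Havg : hsym a b (S n) = q * hsym a b n + (a ^ S n + b ^ S n) / 2).
  { pose proof (hsym_succ_left a b n) as Hleft.
    change (hsym a b (S n)) with (b * hsym a b n + a ^ S n) in *.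
    unfold q. lra. }
  assert (Hdiag : hsym q q (S n) = q * hsym q q n + q ^ S n) by reflexivity.
  pose proof (pow_mean a b (S n) Ha Hb) as Hmean. fold q in Hmean.
  lra.
Qed.

Lemma hsym_gap_nonneg (a b : R) (n : nat) : 0 <= a -> 0 <= b ->
  hsym a b n - hsym ((a + b) / 2) ((a + b) / 2) n >= 0.
Proof.
  intros Ha Hb. induction n as [|n IH].
  - simpl. lra.
  - pose proof (hsym_gap_step a b n Ha Hb) as Hstep. cbv zeta in Hstep.
    assert (0 <= (a + b) / 2 * (hsym a b n - hsym ((a + b) / 2) ((a + b) / 2) n))
      by (apply Rmult_le_pos; lra).
    lra.
Qed.

Lemma hsym_tail_mean_le (a b : R) (n : nat) :
  0 <= a -> 0 <= b -> (a + b) / 2 <= 1 ->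
  let q := (a + b) / 2 in
  hsym a b (S n) - a * b * hsym a b n >= hsym q q (S n) - q * q * hsym q q n.
Proof.
  intros Ha Hb Hq1 q.
  pose proof (hsym_gap_step a b n Ha Hb) as Hstep. fold q in Hstep.
  pose proof (hsym_gap_nonneg a b n Ha Hb) as Hgap. fold q in Hgap.
  pose proof (hsym_nonneg a b n Ha Hb) as Hh.
  set (D := hsym a b n - hsym q q n) in *.
  assert (Hq0 : 0 <= q) by (unfold q; lra).
  assert (Hq_le1 : q <= 1) by exact Hq1.
  assert (HqD : q * q * D <= q * D).
  { assert (0 <= q * D) by (apply Rmult_le_pos; lra).
    replace (q * q * D) with (q * (q * D)) by ring.
    rewrite <- (Rmult_1_l (q * D)) at 2.
    apply Rmult_le_compat_r; lra. }
  (* AM-GM: a b <= q^2. *)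
  assert (Hamgm : 0 <= (q * q - a * b) * hsym a b n).
  { apply Rmult_le_pos; [|lra]. unfold q.
    replace ((a + b) / 2 * ((a + b) / 2) - a * b) with (((a - b) / 2) ^ 2) by field.
    apply pow2_ge_0. }
  unfold D in *. nra.
Qed.

Lemma geom_sum_tail_succ (p1 p2 : R) (n : nat) :
  geom_sum_tail p1 p2 (S n) = geom_sum_tail p1 p2 n - geom_sum_pmf p1 p2 (S n).
Proof. unfold geom_sum_tail. rewrite tech5. ring. Qed.

(* X1 + X2 >= 2 almost surely, so P(X1 + X2 > 1) = 1. *)
Lemma geom_sum_tail_one (p1 p2 : R) : geom_sum_tail p1 p2 1 = 1.
Proof. unfold geom_sum_tail, geom_sum_pmf. simpl. ring. Qed.

Lemma geom_sum_pmf_SS (p1 p2 : R) (n : nat) :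
  geom_sum_pmf p1 p2 (S (S n)) = p1 * p2 * hsym (1 - p1) (1 - p2) n.
Proof.
  unfold geom_sum_pmf. rewrite tech5, Nat.sub_diag, decomp_sum by lia.
  simpl pred.
  rewrite (sum_eq _ (fun k => (1 - p1) ^ k * (1 - p2) ^ (n - k) * (p1 * p2))).
  - rewrite <- scal_sum, hsym_sum. simpl geom_pmf. ring.
  - intros i Hi. replace (S (S n) - S i)%nat with (S (n - i)) by lia.
    simpl geom_pmf. ring.
Qed.

Lemma geom_sum_tail_SS (p1 p2 : R) (n : nat) :
  let a := 1 - p1 in let b := 1 - p2 in
  geom_sum_tail p1 p2 (S (S n)) = hsym a b (S n) - a * b * hsym a b n.
Proof.
  intros a b. induction n as [|n IH].
  - rewrite geom_sum_tail_succ, geom_sum_tail_one, geom_sum_pmf_SS.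
    unfold a, b. simpl. ring.
  - rewrite geom_sum_tail_succ, IH, geom_sum_pmf_SS, hsym_rec3.
    fold a b. replace p1 with (1 - a) by (unfold a; ring).
    replace p2 with (1 - b) by (unfold b; ring). ring.
Qed.

Theorem lemmaB3 (p1 p2 : R) (j : nat) :
  0 < p1 -> p1 <= p2 -> p2 <= 1 -> (0 < j)%nat ->
  geom_sum_tail p1 p2 j >= geom_sum_tail ((p1 + p2) / 2) ((p1 + p2) / 2) j.
Proof.
  intros Hp1 Hp12 Hp2 Hj.
  destruct j as [|[|n]]; [lia | rewrite !geom_sum_tail_one; lra |].
  rewrite !geom_sum_tail_SS.
  replace (1 - (p1 + p2) / 2) with ((1 - p1 + (1 - p2)) / 2) by field.
  apply hsym_tail_mean_le; lra.
Qed.
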